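(* Let $b \geq 2$ be an integer and let $A_b \subseteq \mathbb{N}$ be the set of all natural numbers whose base-$b$ representation begins with the digit $1$. Then $A_b$ is fractionally dense if $b \in \{2,3,4\}$, and $A_b$ is not fractionally dense if $b \geq 5$.
   Context: $\mathbb{N} = \{1,2,3,\ldots\}$. For $A \subseteq \mathbb{N}$, the quotient set is $R(A) = \{a/a' : a, a' \in A\}$. A set $A \subseteq \mathbb{N}$ is called fractionally dense if the closure of $R(A)$ in $\mathbb{R}$ equals $[0,\infty)$. *)

From Stdlib Require Import Reals Lra Lia.
Open Scope R_scope.

(* Subsets of N = {1,2,3,...} are predicates on nat; membership requires n >= 1. *)

Definition quotient_set (A : nat -> Prop) (r : R) : Prop :=
  exists a a' : nat, (1 <= a)%nat /\ (1 <= a')%nat /\ A a /\ A a' /\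
    r = INR a / INR a'.

Definition closure_R (S : R -> Prop) (x : R) : Prop :=
  forall eps : R, 0 < eps -> exists y : R, S y /\ Rabs (y - x) < eps.

Definition fractionally_dense (A : nat -> Prop) : Prop :=
  forall x : R, closure_R (quotient_set A) x <-> 0 <= x.

(* Positive integers whose base-b representation begins with digit 1:
   n >= 1 and b^k <= n < 2 * b^k for some k. *)
Definition leading_digit_one (b : nat) (n : nat) : Prop :=
  (1 <= n)%nat /\ exists k : nat, (b ^ k <= n < 2 * b ^ k)%nat.

From Stdlib Require Import Reals Lra Lia ZArith.

(* Every quotient of two elements of [A_b] is either below 2 (when the numerator
   has at most as many digits as the denominator) or above [b/2] (otherwise), so
   for [b >= 5] the interval [(2, b/2)] contains no quotient at all.
   For [b <= 4], approximate [x > 0] by [n / b^j] with [n = floor (x b^j)]; if [n]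
   does not start with 1, then [n] lies in [[2 b^k, b^(k+1))] and, since
   [b <= 4], the number [m = floor (2 x b^j)] lies in [[b^(k+1), 2 b^(k+1))], so
   [m / (2 b^j - 1)] approximates [x] instead.  Both quotients are within
   [(x + 1) / b^j] of [x]. *)

Lemma nat_floor_exists (X : R) : 0 <= X -> exists n : nat, INR n <= X < INR n + 1.
Proof.
  intros HX. destruct (archimed X) as [Hup1 Hup2].
  set (z := (up X - 1)%Z).
  assert (Hz : IZR z = IZR (up X) - 1) by (unfold z; rewrite minus_IZR; reflexivity).
  assert (Hz0 : (0 <= z)%Z).
  { assert (Hlt : IZR (-1) < IZR z) by (rewrite Hz; simpl; lra).
    apply lt_IZR in Hlt. lia. }
  exists (Z.to_nat z). rewrite INR_IZR_INZ, Z2Nat.id by exact Hz0. lra.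
Qed.

Lemma INR_pow_unbounded (b : nat) (M : R) : (2 <= b)%nat -> exists j, M < INR (b ^ j).
Proof.
  intros Hb.
  assert (Hb1 : Rabs (INR b) > 1).
  { rewrite Rabs_right by (apply Rle_ge, pos_INR).
    apply le_INR in Hb. simpl in Hb. lra. }
  destruct (Pow_x_infinity _ Hb1 (M + 1)) as [j Hj].
  exists j. specialize (Hj j (le_n j)).
  rewrite pow_INR. rewrite Rabs_right in Hj; [lra|].
  apply Rle_ge, pow_le, pos_INR.
Qed.

Lemma nat_pow_bracket (b n : nat) : (2 <= b)%nat -> (1 <= n)%nat ->
  exists k, (b ^ k <= n < b ^ S k)%nat.
Proof.
  intros Hb. induction n as [|n IH]; intros Hn; [lia|].
  destruct (Nat.eq_dec n 0) as [->|Hn0].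
  - exists 0%nat. simpl. lia.
  - destruct IH as [k Hk]; [lia|].
    destruct (Nat.eq_dec (S n) (b ^ S k)) as [E|E].
    + exists (S k). rewrite E. split; [lia|]. apply Nat.pow_lt_mono_r; lia.
    + exists k. lia.
Qed.

Lemma pow_ge1 (b j : nat) : (1 <= b)%nat -> (1 <= b ^ j)%nat.
Proof. intros Hb. pose proof (Nat.pow_nonzero b j). lia. Qed.

Lemma leading_digit_one_pow (b j : nat) : (1 <= b)%nat -> leading_digit_one b (b ^ j).
Proof. intros Hb. pose proof (pow_ge1 b j Hb). split; [lia|]. exists j. lia. Qed.

Lemma leading_digit_one_double_pow_pred (b j : nat) : (1 <= b)%nat ->
  leading_digit_one b (2 * b ^ j - 1).
Proof. intros Hb. pose proof (pow_ge1 b j Hb). split; [lia|]. exists j. lia. Qed.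

Lemma leading_digit_one_or_double (b n m : nat) : (2 <= b <= 4)%nat -> (1 <= n)%nat ->
  (2 * n <= m <= 2 * n + 1)%nat ->
  leading_digit_one b n \/ leading_digit_one b m.
Proof.
  intros Hb Hn Hm. destruct (nat_pow_bracket b n (proj1 Hb) Hn) as [k Hk].
  rewrite Nat.pow_succ_r' in Hk.
  destruct (Nat.lt_ge_cases n (2 * b ^ k)) as [Hlt|Hge].
  - left. split; [lia|]. exists k. lia.
  - right. split; [lia|]. exists (S k). rewrite Nat.pow_succ_r'. nia.
Qed.

Lemma leading_digit_one_ratio_gap (b a a' : nat) : (1 <= b)%nat ->
  leading_digit_one b a -> leading_digit_one b a' ->
  (a < 2 * a' \/ b * a' < 2 * a)%nat.
Proof.
  intros Hb [_ [k Hk]] [_ [j Hj]].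
  destruct (Nat.le_gt_cases k j) as [Hkj|Hkj].
  - left. pose proof (Nat.pow_le_mono_r b k j ltac:(lia) Hkj). lia.
  - right. pose proof (Nat.pow_le_mono_r b (S j) k ltac:(lia) Hkj) as Hpow.
    rewrite Nat.pow_succ_r' in Hpow. nia.
Qed.

Lemma quotient_leading_digit_one (b a a' : nat) :
  leading_digit_one b a -> leading_digit_one b a' ->
  quotient_set (leading_digit_one b) (INR a / INR a').
Proof.
  intros Ha Ha'. exists a, a'.
  split; [apply Ha|]. split; [apply Ha'|]. auto.
Qed.

Lemma quotient_set_nonneg (A : nat -> Prop) (y : R) : quotient_set A y -> 0 <= y.
Proof.
  intros (a & a' & Ha & Ha' & _ & _ & ->).
  unfold Rdiv. apply Rmult_le_pos; [apply pos_INR|].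
  apply Rlt_le, Rinv_0_lt_compat, lt_0_INR. lia.
Qed.

Lemma closure_quotient_set_nonneg (A : nat -> Prop) (x : R) :
  closure_R (quotient_set A) x -> 0 <= x.
Proof.
  intros Hcl. destruct (Rle_or_lt 0 x) as [Hx|Hx]; [exact Hx|].
  destruct (Hcl (- x)) as [y [Hy Hyx]]; [lra|].
  pose proof (quotient_set_nonneg _ _ Hy). rewrite Rabs_right in Hyx; lra.
Qed.

Lemma quotient_leading_digit_one_gap (b : nat) (y : R) : (1 <= b)%nat ->
  quotient_set (leading_digit_one b) y -> y < 2 \/ INR b / 2 < y.
Proof.
  intros Hb (a & a' & _ & Ha' & Ha & Ha'A & ->).
  assert (Ha'R : 0 < INR a') by (apply lt_0_INR; lia).
  destruct (leading_digit_one_ratio_gap b a a' Hb Ha Ha'A) as [Hlt|Hgt];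
    apply lt_INR in Hlt || apply lt_INR in Hgt; rewrite !mult_INR in *; simpl in *.
  - left. apply Rmult_lt_reg_r with (INR a'); [exact Ha'R|].
    field_simplify; lra.
  - right. apply Rmult_lt_reg_r with (2 * INR a'); [lra|].
    field_simplify; lra.
Qed.

Lemma Rabs_div_sub_mul (u v N : R) : 0 < N -> Rabs (u / N - v) * N = Rabs (u - v * N).
Proof.
  intros HN. rewrite <- (Rabs_right N) at 2 by lra. rewrite <- Rabs_mult.
  f_equal. field. lra.
Qed.

Lemma Rdiv_lt_mult (a c N : R) : 0 < c -> a / c < N -> a < c * N.
Proof.
  intros Hc H. apply Rmult_lt_compat_l with (r := c) in H; [|exact Hc].
  replace (c * (a / c)) with a in H by (field; lra). exact H.
Qed.

Lemma quotient_leading_digit_one_near (b j : nat) (x : R) : (2 <= b <= 4)%nat ->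
  0 < x -> 1 <= x * INR (b ^ j) ->
  exists y, quotient_set (leading_digit_one b) y /\ Rabs (y - x) * INR (b ^ j) < x + 1.
Proof.
  intros Hb Hx HxN. set (N := INR (b ^ j)) in *.
  assert (HN : 1 <= N) by (apply (le_INR 1), pow_ge1; lia).
  destruct (nat_floor_exists (x * N)) as [n Hn]; [lra|].
  destruct (nat_floor_exists (2 * (x * N))) as [m Hm]; [lra|].
  assert (Hn1 : (0 < n)%nat) by (apply INR_lt; simpl; lra).
  assert (Hmn : (2 * n <= m <= 2 * n + 1)%nat).
  { assert (Hlo : (2 * n < m + 1)%nat) by (apply INR_lt; rewrite plus_INR, mult_INR; simpl; lra).
    assert (Hhi : (m < 2 * n + 2)%nat) by (apply INR_lt; rewrite plus_INR, mult_INR; simpl; lra).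
    lia. }
  destruct (leading_digit_one_or_double b n m Hb Hn1 Hmn) as [Hlead|Hlead].
  - exists (INR n / N). split.
    + apply quotient_leading_digit_one; [exact Hlead | apply leading_digit_one_pow; lia].
    + rewrite Rabs_div_sub_mul by lra. apply Rabs_def1; lra.
  - (* the denominator [2 b^j - 1] absorbs the doubling of the numerator *)
    set (D := INR (2 * b ^ j - 1)).
    assert (HD : D = 2 * N - 1).
    { unfold D. rewrite minus_INR by (pose proof (pow_ge1 b j ltac:(lia)); lia).
      rewrite mult_INR. fold N. simpl (INR 2). simpl (INR 1). lra. }
    exists (INR m / D). split.
    + apply quotient_leading_digit_one;
        [exact Hlead | apply leading_digit_one_double_pow_pred; lia].
    + apply Rle_lt_trans with (Rabs (INR m / D - x) * D).
      { apply Rmult_le_compat_l; [apply Rabs_pos | lra]. }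
      rewrite Rabs_div_sub_mul by lra. rewrite HD. apply Rabs_def1; lra.
Qed.

Lemma closure_leading_digit_one_pos (b : nat) (x : R) : (2 <= b <= 4)%nat -> 0 < x ->
  closure_R (quotient_set (leading_digit_one b)) x.
Proof.
  intros Hb Hx eps Heps.
  destruct (INR_pow_unbounded b (Rmax ((x + 1) / eps) (1 / x)) ltac:(lia)) as [j Hj].
  assert (Hbig : x + 1 < eps * INR (b ^ j) /\ 1 < x * INR (b ^ j)).
  { split; apply Rdiv_lt_mult; try lra; eapply Rle_lt_trans; [| exact Hj | | exact Hj];
      [apply Rmax_l | apply Rmax_r]. }
  destruct (quotient_leading_digit_one_near b j x Hb Hx) as [y [Hy Hyx]]; [lra|].
  exists y. split; [exact Hy|].
  apply Rmult_lt_reg_r with (INR (b ^ j)); [apply lt_0_INR, pow_ge1; lia | lra].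
Qed.

Lemma closure_leading_digit_one_zero (b : nat) : (2 <= b)%nat ->
  closure_R (quotient_set (leading_digit_one b)) 0.
Proof.
  intros Hb eps Heps.
  destruct (INR_pow_unbounded b (1 / eps) Hb) as [j Hj].
  apply Rdiv_lt_mult in Hj; [|exact Heps].
  assert (HN : 0 < INR (b ^ j)) by (apply lt_0_INR, pow_ge1; lia).
  exists (INR 1 / INR (b ^ j)). split.
  - apply quotient_leading_digit_one;
      [apply (leading_digit_one_pow b 0) | apply leading_digit_one_pow]; lia.
  - apply Rmult_lt_reg_r with (INR (b ^ j)); [exact HN|].
    rewrite Rabs_div_sub_mul by exact HN. rewrite Rmult_0_l, Rminus_0_r.
    rewrite Rabs_right by (simpl; lra). simpl. lra.
Qed.

Theorem mainTheorem1 : forall b : nat, (2 <= b)%nat ->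
  ((b <= 4)%nat -> fractionally_dense (leading_digit_one b)) /\
  ((5 <= b)%nat -> ~ fractionally_dense (leading_digit_one b)).
Proof.
  intros b Hb. split.
  - intros Hb4 x. split; [apply closure_quotient_set_nonneg|].
    intros Hx. destruct (Req_dec x 0) as [->|Hx0].
    + apply closure_leading_digit_one_zero, Hb.
    + apply closure_leading_digit_one_pos; lra || lia.
  - intros Hb5 Hdense.
    pose proof (le_INR _ _ Hb5) as Hb5R. simpl in Hb5R.
    (* the midpoint of the gap [(2, b/2)], at distance [b/4 - 1] from both ends *)
    destruct (proj2 (Hdense (1 + INR b / 4)) ltac:(lra) (INR b / 4 - 1)) as [y [Hy Hyx]];
      [lra|].
    apply Rabs_def2 in Hyx.
    destruct (quotient_leading_digit_one_gap b y ltac:(lia) Hy); lra.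
Qed.
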